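(* Let $g$ be monotone increasing and satisfy hypothesis (H), let $h\ge0$, let $\phi(x+ct)$ with $c=c_*>c_\#$ be a pushed traveling front, and fix $\lambda\in(\lambda_1(c),\lambda_2(c))$. There exist constants $\gamma>0$ and $\delta>0$ such that the following holds. Let $w$ be a solution of $$w_t(t,z)=w_{zz}(t,z)-cw_z(t,z)-w(t,z)+g(w(t-h,z-ch)),\ t>0,\ z\in\mathbb{R},$$ with continuous initial datum $w(s,z)=\tilde w_0(s,z)\in[0,\kappa]$, $s\in[-h,0]$, locally Hölder in $z$ uniformly in $s$. Let $R>ch$ be such that $0\le w(t,z),\phi(z)\le\delta$ whenever $z\le-R+ch$, $t\ge-h$, and $|w(t,z)-\kappa|,|\phi(z)-\kappa|<\delta$ whenever $z\ge R-ch$, $t\ge-h$. Suppose further that $w(s,z)\le\phi(z)+\delta\eta(z)$ for all $(s,z)\in[-h,0]\times\mathbb{R}$ and $w(t,z)\le\phi(z)$ for all $(t,z)\in\mathbb{R}_+\times[-R-ch,R+ch]$. Then $w(t,z)\le\phi(z)+\delta\eta(z)e^{-\gamma t}$ for all $z\in\mathbb{R}$, $t\ge0$.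
   Context: Hypothesis (H) on $g:\mathbb{R}_+\to\mathbb{R}_+$: $g(x)=x$ has exactly two nonnegative solutions $0$ and $\kappa>0$; $g$ is $C^1$ in a $\delta_0$-neighbourhood of $0$ and of $\kappa$, with $g'(0)>1$, $g'(\kappa)<1$; $|g(u)-g(v)|\le L_g|u-v|$ for $u,v\in[0,\kappa]$; there are $C>0,\theta\in(0,1]$ with $|g'(u)-g'(0)|+|g'(\kappa)-g'(\kappa-u)|\le Cu^\theta$ for $u\in(0,\delta_0]$; $g$ is extended linearly and $C^1$-smoothly to $(-\infty,0]$ and $[\kappa,\infty)$. Characteristic function $\chi(z,c)=z^2-cz-1+g'(0)e^{-zch}$; $c_\#$ is the unique real $c$ for which $\chi(\cdot,c)$ has a positive double zero; for $c>c_\#$ its two positive simple zeros are $\lambda_1(c)<\lambda_2(c)$. A wavefront is a solution $u=\phi(x+ct)$ of $u_t=u_{xx}-u+g(u(t-h,x))$ with $\phi>0$, $\phi(-\infty)=0$, $\phi(+\infty)=\kappa$; $c_*$ is the minimal wavefront speed; the minimal wavefront is pushed if $c_*>c_\#$. $\eta(z)=\min\{e^{\lambda z},1\}$. *)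

From Stdlib Require Import Reals.
From Coquelicot Require Import Coquelicot.
Open Scope R_scope.

Definition hyp_H (g : R -> R) (kappa : R) : Prop :=
  0 < kappa /\ g 0 = 0 /\ g kappa = kappa /\
  (forall x, 0 <= x -> g x = x -> x = 0 \/ x = kappa) /\
  exists delta0 Lg C theta : R,
    0 < delta0 /\ 0 < C /\ 0 < theta /\ theta <= 1 /\
    (forall x, Rabs x < delta0 ->
       ex_derive g x /\ continuous (Derive g) x) /\
    (forall x, Rabs (x - kappa) < delta0 ->
       ex_derive g x /\ continuous (Derive g) x) /\
    Derive g 0 > 1 /\ Derive g kappa < 1 /\
    (forall u v, 0 <= u <= kappa -> 0 <= v <= kappa ->
       Rabs (g u - g v) <= Lg * Rabs (u - v)) /\
    (forall u, 0 < u <= delta0 ->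
       Rabs (Derive g u - Derive g 0) + Rabs (Derive g kappa - Derive g (kappa - u))
       <= C * Rpower u theta) /\
    (* linear (C^1) extension to (-oo,0] and [kappa,+oo) *)
    (forall x, x <= 0 -> g x = Derive g 0 * x) /\
    (forall x, kappa <= x -> g x = kappa + Derive g kappa * (x - kappa)).

Definition chi (g : R -> R) (h z c : R) : R :=
  z ^ 2 - c * z - 1 + Derive g 0 * exp (- z * c * h).

Definition chi_z (g : R -> R) (h z c : R) : R :=
  2 * z - c - Derive g 0 * c * h * exp (- z * c * h).

Definition has_pos_double_zero (g : R -> R) (h c : R) : Prop :=
  exists z, 0 < z /\ chi g h z c = 0 /\ chi_z g h z c = 0.

Definition is_c_sharp (g : R -> R) (h cs : R) : Prop :=
  has_pos_double_zero g h cs /\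
  forall c', has_pos_double_zero g h c' -> c' = cs.

Definition are_lambdas (g : R -> R) (h c l1 l2 : R) : Prop :=
  0 < l1 /\ l1 < l2 /\ chi g h l1 c = 0 /\ chi g h l2 c = 0 /\
  (forall z, 0 < z -> chi g h z c = 0 -> z = l1 \/ z = l2).

(** Wavefront u(t,x) = phi(x + c t) of u_t = u_xx - u + g(u(t-h,x)):
    profile equation  phi'' - c phi' - phi + g(phi(s - c h)) = 0. *)
Definition is_wavefront (g : R -> R) (kappa h c : R) (phi : R -> R) : Prop :=
  (forall s, 0 < phi s) /\
  is_lim phi m_infty 0 /\ is_lim phi p_infty kappa /\
  (forall s, ex_derive phi s /\ ex_derive (Derive phi) s) /\
  (forall s, Derive_n phi 2 s - c * Derive phi s - phi s + g (phi (s - c * h)) = 0).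

Definition is_min_speed (g : R -> R) (kappa h cstar : R) : Prop :=
  (exists phi, is_wavefront g kappa h cstar phi) /\
  (forall c phi, is_wavefront g kappa h c phi -> cstar <= c).

Definition eta (lam z : R) : R := Rmin (exp (lam * z)) 1.

Definition is_solution (g : R -> R) (h c : R) (w : R -> R -> R) : Prop :=
  (forall t z, -h <= t -> forall eps, 0 < eps -> exists d, 0 < d /\
     forall t' z', -h <= t' -> Rabs (t' - t) < d -> Rabs (z' - z) < d ->
       Rabs (w t' z' - w t z) < eps) /\
  (forall t z, 0 < t ->
     ex_derive (fun s => w s z) t /\ ex_derive (fun y => w t y) z /\
     ex_derive (fun y => Derive (fun y' => w t y') y) z /\
     Derive (fun s => w s z) t =
       Derive_n (fun y => w t y) 2 z - c * Derive (fun y => w t y) z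
       - w t z + g (w (t - h) (z - c * h))).

Definition loc_holder_initial (h : R) (w : R -> R -> R) : Prop :=
  forall a b, a <= b -> exists C alpha, 0 <= C /\ 0 < alpha /\ alpha <= 1 /\
    forall s z1 z2, -h <= s <= 0 -> a <= z1 <= b -> a <= z2 <= b ->
      Rabs (w s z1 - w s z2) <= C * Rpower (Rabs (z1 - z2)) alpha.

(* Outside the window [|z| <= R + c h], where [w <= phi] is assumed, [w] is
   compared with the barriers [phi + delta e^(lam z - gamma t)] on the left and
   [phi + delta e^(-gamma t)] on the right.  As [g] is increasing and Lipschitz,
   [u = w - barrier] satisfies [u_t <= u_zz - c u_z - u + L (u (t - h, z - c h))^+]
   as soon as the barrier is a supersolution, which for small [gamma], [delta]
   follows from [chi(lam) < 0] and the C^1 behaviour of [g] at [0] on the left,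
   and from [g'(kappa) < 1] on the right.  A maximum principle on half-lines,
   proved by touching [u] from above with [eps e^(K t) (1 + (z - a)^2)] at a
   first contact time, then gives [u <= 0]. *)

From Stdlib Require Import Reals Lra Psatz Classical ClassicalEpsilon.
From Coquelicot Require Import Coquelicot.
Open Scope R_scope.

Lemma exp_le_mono x y : x <= y -> exp x <= exp y.
Proof. intros [H | ->]; [apply Rlt_le, exp_increasing, H | lra]. Qed.

Lemma continuity_pt_of_ex_derive f x : ex_derive f x -> continuity_pt f x.
Proof. intro H. apply continuity_pt_filterlim. exact (ex_derive_continuous f x H). Qed.

Lemma Derive_nonneg_of_left_max (f : R -> R) t r :
  0 < r -> ex_derive f t -> (forall s, t - r < s < t -> f s <= f t) ->
  0 <= Derive f t.
Proof.
  intros Hr Hd Hmax. apply Rnot_lt_le; intro Hneg.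
  pose proof (proj1 (is_derive_Reals _ _ _) (Derive_correct _ _ Hd)) as Hlim.
  destruct (Hlim (- Derive f t / 2)) as [d Hq]; [lra |].
  pose proof (cond_pos d) as Hd0.
  pose proof (Rmin_l d r). pose proof (Rmin_r d r). pose proof (Rmin_pos d r Hd0 Hr).
  set (s := - Rmin d r / 2).
  specialize (Hq s ltac:(unfold s; lra) ltac:(unfold s; rewrite Rabs_left; lra)).
  specialize (Hmax (t + s) ltac:(unfold s; lra)).
  assert (/ s < 0) by (apply Rinv_lt_0_compat; unfold s; lra).
  assert (0 <= (f (t + s) - f t) / s) by (unfold Rdiv; nra).
  apply Rabs_def2 in Hq. lra.
Qed.

Lemma Derive_eq0_of_local_max (f : R -> R) z r :
  0 < r -> ex_derive f z -> (forall y, Rabs (y - z) < r -> f y <= f z) ->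
  Derive f z = 0.
Proof.
  intros Hr Hd Hmax.
  rewrite <- (Derive_Reals f z (ex_derive_Reals_0 _ _ Hd)).
  apply (deriv_maximum f (z - r) (z + r)); try lra.
  intros y H1 H2. apply Hmax. unfold Rabs; destruct Rcase_abs; lra.
Qed.

(* If [f''(z) > 0] then [f'] is positive just right of [z], so [f] increases there. *)
Lemma Derive2_nonpos_of_local_max (f : R -> R) z r :
  0 < r -> (forall y, ex_derive f y) -> ex_derive (Derive f) z ->
  (forall y, Rabs (y - z) < r -> f y <= f z) -> Derive (Derive f) z <= 0.
Proof.
  intros Hr Hd Hd2 Hmax. apply Rnot_lt_le; intro Hpos.
  assert (H0 : Derive f z = 0) by exact (Derive_eq0_of_local_max f z r Hr (Hd z) Hmax).
  pose proof (proj1 (is_derive_Reals _ _ _) (Derive_correct _ _ Hd2)) as Hlim.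
  destruct (Hlim (Derive (Derive f) z / 2)) as [d Hq]; [lra |].
  pose proof (cond_pos d) as Hd0.
  pose proof (Rmin_l d r). pose proof (Rmin_r d r). pose proof (Rmin_pos d r Hd0 Hr).
  set (s := Rmin d r / 2).
  assert (Hinc : forall y, z < y <= z + s -> 0 < Derive f y).
  { intros y Hy. specialize (Hq (y - z) ltac:(lra) ltac:(rewrite Rabs_right; unfold s in *; lra)).
    replace (z + (y - z)) with y in Hq by ring. rewrite H0, Rminus_0_r in Hq.
    apply Rabs_def2 in Hq.
    assert (Hy' : 0 < / (y - z)) by (apply Rinv_0_lt_compat; lra).
    assert (Derive f y = Derive f y / (y - z) * (y - z)) by (field; lra).
    unfold Rdiv in Hq. nra. }
  destruct (MVT_cor2 f (Derive f) z (z + s)) as [x [Hmvt Hx]]; [unfold s; lra | |].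
  { intros x _. apply is_derive_Reals, Derive_correct, Hd. }
  specialize (Hinc x ltac:(lra)).
  specialize (Hmax (z + s) ltac:(rewrite Rabs_right; unfold s in *; lra)).
  assert (0 < s) by (unfold s; lra). nra.
Qed.

Lemma touching_from_above (u psi : R -> R -> R) (pz : R -> R) t z r pt pzz :
  0 < r ->
  ex_derive (fun s => u s z) t -> (forall y, ex_derive (fun y => u t y) y) ->
  ex_derive (Derive (fun y => u t y)) z ->
  is_derive (fun s => psi s z) t pt -> (forall y, is_derive (fun y => psi t y) y (pz y)) ->
  is_derive pz z pzz ->
  u t z = psi t z ->
  (forall s, t - r < s < t -> u s z <= psi s z) ->
  (forall y, Rabs (y - z) < r -> u t y <= psi t y) ->
  pt <= Derive (fun s => u s z) t /\ Derive (fun y => u t y) z = pz z /\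
  Derive (Derive (fun y => u t y)) z <= pzz.
Proof.
  intros Hr Ht Hz Hzz Hpt Hpz Hpzz Heq Htime Hspace.
  set (F := fun y => u t y - psi t y).
  assert (HF : forall y, Derive F y = Derive (fun y => u t y) y - pz y).
  { intro y. unfold F. rewrite Derive_minus; [| apply Hz | eexists; apply Hpz].
    f_equal. apply is_derive_unique, Hpz. }
  assert (HFex : forall y, ex_derive F y).
  { intro y. unfold F.
    apply (ex_derive_minus (fun y => u t y) (fun y => psi t y)); [apply Hz | eexists; apply Hpz]. }
  assert (HFex2 : ex_derive (Derive F) z).
  { apply (ex_derive_ext _ _ z (fun y => eq_sym (HF y))).
    apply (ex_derive_minus (Derive (fun y => u t y)) pz); [exact Hzz | eexists; exact Hpzz]. }
  assert (HFmax : forall y, Rabs (y - z) < r -> F y <= F z).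
  { intros y Hy. unfold F. rewrite Heq. specialize (Hspace y Hy). lra. }
  split; [| split].
  - assert (Hex : ex_derive (fun s => u s z - psi s z) t)
      by (apply (ex_derive_minus (fun s => u s z) (fun s => psi s z));
          [exact Ht | eexists; exact Hpt]).
    pose proof (Derive_nonneg_of_left_max _ t r Hr Hex) as Hmax.
    rewrite Derive_minus in Hmax; [| exact Ht | eexists; exact Hpt].
    replace (Derive (fun s => psi s z) t) with pt in Hmax
      by (symmetry; apply is_derive_unique, Hpt).
    enough (0 <= Derive (fun s => u s z) t - pt) by lra.
    apply Hmax. intros s Hs. rewrite Heq. specialize (Htime s Hs). lra.
  - pose proof (Derive_eq0_of_local_max F z r Hr (HFex z) HFmax). rewrite HF in H. lra.
  - pose proof (Derive2_nonpos_of_local_max F z r Hr HFex HFex2 HFmax) as H2.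
    rewrite (Derive_ext _ _ z HF), Derive_minus in H2; [| exact Hzz | eexists; exact Hpzz].
    replace (Derive pz z) with pzz in H2 by (symmetry; apply is_derive_unique, Hpzz). lra.
Qed.

Lemma increment_le_of_Derive_le (f : R -> R) a s D :
  0 <= s -> (forall x, a <= x <= a + s -> ex_derive f x) ->
  (forall x, a < x < a + s -> Derive f x <= D) -> f (a + s) - f a <= D * s.
Proof.
  intros [Hs | <-] Hd Hb; [| rewrite Rplus_0_r; lra].
  destruct (MVT_cor2 f (Derive f) a (a + s)) as [x [Hx Hax]]; [lra | |].
  { intros x Hx. apply is_derive_Reals, Derive_correct, Hd; exact Hx. }
  rewrite Hx. replace (a + s - a) with s by ring.
  apply Rmult_le_compat_r; [lra | apply Hb; exact Hax].
Qed.

Lemma increment_le_near (f : R -> R) x0 d0 rho :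
  0 < d0 -> 0 < rho -> (forall x, Rabs (x - x0) < d0 -> ex_derive f x) ->
  continuous (Derive f) x0 ->
  exists b, 0 < b /\ forall a s, x0 - b <= a -> 0 <= s -> a + s <= x0 + b ->
    f (a + s) - f a <= (Derive f x0 + rho) * s.
Proof.
  intros Hd0 Hrho Hd Hc. apply continuity_pt_filterlim in Hc.
  destruct (Hc rho Hrho) as [alp [Halp Hnear]].
  pose proof (Rmin_l d0 alp). pose proof (Rmin_r d0 alp). pose proof (Rmin_pos d0 alp Hd0 Halp).
  exists (Rmin d0 alp / 2). split; [lra |]. intros a s Ha Hs Has.
  apply increment_le_of_Derive_le; [exact Hs | |].
  - intros x Hx. apply Hd. unfold Rabs; destruct Rcase_abs; lra.
  - intros x Hx. destruct (Req_dec x x0) as [-> | Hne]; [lra |].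
    assert (Hdist : R_dist x x0 < alp) by (unfold R_dist, Rabs; destruct Rcase_abs; lra).
    specialize (Hnear x (conj (conj I (not_eq_sym Hne)) Hdist)).
    unfold R_dist in Hnear. apply Rabs_def2 in Hnear. lra.
Qed.

Lemma le_near_0 (f : R -> R) M : continuity_pt f 0 -> f 0 < M ->
  exists x0, 0 < x0 /\ forall x, 0 <= x <= x0 -> f x <= M.
Proof.
  intros Hc HM. destruct (Hc (M - f 0)) as [alp [Halp Hnear]]; [lra |].
  exists (alp / 2). split; [lra |]. intros x Hx.
  destruct (Req_dec x 0) as [-> | Hne]; [lra |].
  assert (Hdist : R_dist x 0 < alp) by (unfold R_dist, Rabs; destruct Rcase_abs; lra).
  specialize (Hnear x (conj (conj I (not_eq_sym Hne)) Hdist)).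
  unfold R_dist in Hnear. apply Rabs_def2 in Hnear. lra.
Qed.

(** * First contact times *)

Definition jointly_continuous_t_ge0 (u : R -> R -> R) : Prop :=
  forall t z, 0 <= t -> forall eps, 0 < eps -> exists d, 0 < d /\
    forall t' z', 0 <= t' -> Rabs (t' - t) < d -> Rabs (z' - z) < d ->
      Rabs (u t' z' - u t z) < eps.

Lemma jointly_continuous_t_ge0_minus u F :
  jointly_continuous_t_ge0 u -> (forall t z, continuity_2d_pt F t z) ->
  jointly_continuous_t_ge0 (fun t z => u t z - F t z).
Proof.
  intros Hu HF t z Ht eps He.
  destruct (Hu t z Ht (eps / 2) ltac:(lra)) as [d1 [Hd1 H1]].
  destruct (HF t z (mkposreal (eps / 2) ltac:(lra))) as [d2 H2].
  pose proof (Rmin_l d1 d2). pose proof (Rmin_r d1 d2).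
  exists (Rmin d1 d2). split; [apply Rmin_pos; [lra | apply cond_pos] |].
  intros t' z' Ht' Hdt Hdz.
  specialize (H1 t' z' Ht' ltac:(lra) ltac:(lra)).
  specialize (H2 t' z' ltac:(lra) ltac:(lra)). simpl in H2.
  replace (u t' z' - F t' z' - (u t z - F t z))
    with ((u t' z' - u t z) - (F t' z' - F t z)) by ring.
  eapply Rle_lt_trans; [apply Rabs_triang |]. rewrite Rabs_Ropp. lra.
Qed.

Lemma exists_inf_of_nonneg_set (P : R -> Prop) t1 :
  P t1 -> (forall t, P t -> 0 <= t) ->
  exists tau, 0 <= tau /\ (forall t, P t -> tau <= t) /\
    forall e, 0 < e -> exists t, P t /\ t < tau + e.
Proof.
  intros H1 Hpos.
  set (E := fun x => forall t, P t -> x <= t).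
  destruct (completeness E) as [tau [Hub Hlub]].
  { exists t1. intros x Hx. exact (Hx t1 H1). }
  { exists 0. intros t Ht. exact (Hpos t Ht). }
  exists tau. split; [| split].
  - apply Hub. intros t Ht. exact (Hpos t Ht).
  - intros t Ht. apply Hlub. intros x Hx. exact (Hx t Ht).
  - intros e He. apply NNPP. intro Hn.
    enough (tau + e <= tau) by lra. apply Hub. intros t Ht.
    apply Rnot_lt_le. intro Hlt. exact (Hn (ex_intro _ t (conj Ht Hlt))).
Qed.

Lemma ValAdh_near (u : nat -> R) l :
  ValAdh u l -> forall d N, 0 < d -> exists n, (N <= n)%nat /\ Rabs (u n - l) < d.
Proof.
  intros Hl d N Hd. apply (Hl (disc l (mkposreal d Hd)) N).
  exists (mkposreal d Hd). now intros x Hx.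
Qed.

Lemma Rabs_sign_mul sg x : sg = 1 \/ sg = -1 -> Rabs (sg * x) = Rabs x.
Proof. intros [-> | ->]; rewrite Rabs_mult; [rewrite Rabs_R1 | rewrite Rabs_m1]; ring. Qed.

Lemma ValAdh_half_line (u : nat -> R) sg a l :
  sg = 1 \/ sg = -1 -> (forall n, 0 <= sg * (u n - a)) -> ValAdh u l -> 0 <= sg * (l - a).
Proof.
  intros Hsg Hu Hl. apply Rnot_lt_le; intro Hneg.
  destruct (ValAdh_near u l Hl (- (sg * (l - a))) 0 ltac:(lra)) as [n [_ Hn]].
  rewrite <- (Rabs_sign_mul sg) in Hn by exact Hsg.
  specialize (Hu n). apply Rabs_def2 in Hn. lra.
Qed.

Lemma nonneg_at_cluster_point (W : R -> R -> R) tau zs (p : nat -> R * R) :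
  jointly_continuous_t_ge0 W -> 0 <= tau ->
  (forall n, tau <= fst (p n) < tau + / (INR n + 1)) ->
  (forall n, 0 < W (fst (p n)) (snd (p n))) ->
  ValAdh (fun n => snd (p n)) zs -> 0 <= W tau zs.
Proof.
  intros HW Htau Hp Hpos Hzs. apply Rnot_lt_le; intro Hneg.
  destruct (HW tau zs Htau (- W tau zs) ltac:(lra)) as [d [Hd Hc]].
  destruct (archimed_cor1 d Hd) as [N [HN HN0]].
  destruct (ValAdh_near _ zs Hzs d N Hd) as [n [Hn Hnz]].
  assert (/ (INR n + 1) < d).
  { apply le_INR in Hn. apply lt_0_INR in HN0.
    eapply Rle_lt_trans; [| exact HN]. apply Rinv_le_contravar; lra. }
  destruct (Hp n) as [Hn1 Hn2]. specialize (Hpos n).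
  specialize (Hc (fst (p n)) (snd (p n)) ltac:(lra) ltac:(rewrite Rabs_right; lra) Hnz).
  apply Rabs_def2 in Hc. lra.
Qed.

Lemma nonpos_at_limit_time (W : R -> R -> R) tau z :
  jointly_continuous_t_ge0 W -> 0 < tau -> (forall t, 0 <= t < tau -> W t z <= 0) ->
  W tau z <= 0.
Proof.
  intros HW Htau Hbefore. apply Rnot_lt_le; intro Hpos.
  destruct (HW tau z (Rlt_le _ _ Htau) (W tau z) Hpos) as [d [Hd Hc]].
  pose proof (Rmax_l 0 (tau - d / 2)). pose proof (Rmax_r 0 (tau - d / 2)).
  assert (Rmax 0 (tau - d / 2) < tau) by (apply Rmax_lub_lt; lra).
  set (t := Rmax 0 (tau - d / 2)) in *.
  specialize (Hc t z ltac:(lra) ltac:(rewrite Rabs_left; lra)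
                ltac:(rewrite Rminus_diag, Rabs_R0; lra)).
  specialize (Hbefore t ltac:(lra)). apply Rabs_def2 in Hc. lra.
Qed.

(* [tau] is the infimum of the times at which [W] is positive somewhere; as [W]
   is negative far away, the witnesses stay in a compact set, and a cluster
   point of them is the contact point [zs]. *)
Lemma first_contact (W : R -> R -> R) sg a M t1 z1 :
  sg = 1 \/ sg = -1 -> jointly_continuous_t_ge0 W ->
  (forall t z, 0 <= t -> 0 <= sg * (z - a) -> M < Rabs (z - a) -> W t z < 0) ->
  (forall z, 0 <= sg * (z - a) -> W 0 z < 0) ->
  0 <= t1 -> 0 <= sg * (z1 - a) -> 0 < W t1 z1 ->
  exists tau zs, 0 < tau /\ 0 <= sg * (zs - a) /\ W tau zs = 0 /\
    forall t z, 0 <= t <= tau -> 0 <= sg * (z - a) -> W t z <= 0.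
Proof.
  intros Hsg HW Hfar Hinit Ht1 Hz1 HW1.
  set (Bad := fun t => 0 <= t /\ exists z, 0 <= sg * (z - a) /\ 0 < W t z).
  destruct (exists_inf_of_nonneg_set Bad t1) as [tau [Htau [Hlow Happ]]].
  { split; [exact Ht1 | exists z1; auto]. }
  { intros t [Ht _]. exact Ht. }
  assert (Hbefore : forall t z, 0 <= t < tau -> 0 <= sg * (z - a) -> W t z <= 0).
  { intros t z Ht Hz. apply Rnot_lt_le; intro Hpos.
    assert (tau <= t) by (apply Hlow; split; [lra | exists z; auto]). lra. }
  assert (Hseq : forall n : nat, exists p : R * R,
    (tau <= fst p < tau + / (INR n + 1) /\ 0 <= sg * (snd p - a)) /\ 0 < W (fst p) (snd p)).
  { intro n. pose proof (pos_INR n).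
    destruct (Happ (/ (INR n + 1))) as [s [[Hs [z [Hz HWz]]] Hs1]];
      [apply Rinv_0_lt_compat; lra |].
    exists (s, z). simpl. pose proof (Hlow s ltac:(split; [exact Hs | exists z; auto])).
    repeat split; auto; lra. }
  destruct (choice _ Hseq) as [p Hp].
  assert (Hbound : forall n, a - M <= snd (p n) <= a + M).
  { intro n. destruct (Hp n) as [[[Hn1 _] Hn2] Hn3].
    destruct (Rle_or_lt (Rabs (snd (p n) - a)) M) as [Hle | Hgt].
    - unfold Rabs in Hle; destruct Rcase_abs in Hle; lra.
    - specialize (Hfar (fst (p n)) (snd (p n)) ltac:(lra) Hn2 Hgt). lra. }
  destruct (Bolzano_Weierstrass _ _ (compact_P3 (a - M) (a + M)) Hbound) as [zs Hzs].
  assert (Hzsa : 0 <= sg * (zs - a))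
    by (apply (ValAdh_half_line (fun n => snd (p n)) sg a zs Hsg); [intro n; apply Hp | exact Hzs]).
  assert (HWzs : 0 <= W tau zs)
    by (apply (nonneg_at_cluster_point W tau zs p HW Htau);
        [intro n; apply Hp | intro n; apply Hp | exact Hzs]).
  assert (Htau0 : 0 < tau).
  { destruct Htau as [Htau | <-]; [exact Htau |]. specialize (Hinit zs Hzsa). lra. }
  assert (Hat : forall z, 0 <= sg * (z - a) -> W tau z <= 0).
  { intros z Hz. apply (nonpos_at_limit_time W tau z HW Htau0).
    intros t Ht. exact (Hbefore t z Ht Hz). }
  exists tau, zs. split; [exact Htau0 | split; [exact Hzsa | split]].
  - specialize (Hat zs Hzsa). lra.
  - intros t z [Ht0 Ht] Hz. destruct Ht as [Ht | ->]; [apply Hbefore; auto | apply Hat; auto].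
Qed.

(** * A maximum principle on half-lines *)

Definition delayed_subsolution_at (c h L : R) (u : R -> R -> R) (t z : R) : Prop :=
  ex_derive (fun s => u s z) t /\ (forall y, ex_derive (fun y => u t y) y) /\
  ex_derive (Derive (fun y => u t y)) z /\
  Derive (fun s => u s z) t <=
    Derive (Derive (fun y => u t y)) z - c * Derive (fun y => u t y) z - u t z
    + L * Rmax 0 (u (t - h) (z - c * h)).

Definition paraboloid (eps K a t z : R) : R := eps * exp (K * t) * (1 + (z - a) ^ 2).

Lemma paraboloid_continuous eps K a t z : continuity_2d_pt (paraboloid eps K a) t z.
Proof.
  unfold paraboloid. apply continuity_2d_pt_mult; [apply continuity_2d_pt_mult |].
  - apply continuity_2d_pt_const.
  - apply (continuity_1d_2d_pt_comp exp (fun t _ => K * t)).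
    + apply continuity_pt_of_ex_derive. auto_derive. auto.
    + apply continuity_2d_pt_mult; [apply continuity_2d_pt_const | apply continuity_2d_pt_id1].
  - apply continuity_2d_pt_plus; [apply continuity_2d_pt_const |]. simpl.
    assert (Hlin : continuity_2d_pt (fun _ z => z - a) t z)
      by (apply continuity_2d_pt_minus;
          [apply continuity_2d_pt_id2 | apply continuity_2d_pt_const]).
    apply continuity_2d_pt_mult; [exact Hlin |].
    apply continuity_2d_pt_mult; [exact Hlin | apply continuity_2d_pt_const].
Qed.

Lemma paraboloid_delay_le eps K a c h t z :
  0 <= eps -> 0 <= K -> 0 <= h ->
  paraboloid eps K a (t - h) (z - c * h) <= (2 + 2 * c ^ 2 * h ^ 2) * paraboloid eps K a t z.
Proof.
  intros Heps HK Hh. unfold paraboloid.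
  assert (Hexp : exp (K * (t - h)) <= exp (K * t)) by (apply exp_le_mono; nra).
  assert (Hquad : 1 + (z - c * h - a) ^ 2 <= (2 + 2 * c ^ 2 * h ^ 2) * (1 + (z - a) ^ 2)).
  { pose proof (pow2_ge_0 (z - a + c * h)). pose proof (pow2_ge_0 (c * h * (z - a))). nra. }
  pose proof (exp_pos (K * (t - h))). pose proof (pow2_ge_0 (z - c * h - a)).
  pose proof (pow2_ge_0 (z - a)).
  replace ((2 + 2 * c ^ 2 * h ^ 2) * (eps * exp (K * t) * (1 + (z - a) ^ 2)))
    with (eps * exp (K * t) * ((2 + 2 * c ^ 2 * h ^ 2) * (1 + (z - a) ^ 2))) by ring.
  apply Rmult_le_compat; [nra | lra | apply Rmult_le_compat_l; lra | exact Hquad].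
Qed.

Lemma paraboloid_far_dominates eps K a B : 0 < eps -> 0 <= K ->
  exists M, forall t z, 0 <= t -> M < Rabs (z - a) -> B < paraboloid eps K a t z.
Proof.
  intros Heps HK. exists (Rmax B 0 / eps + 1). intros t z Ht Hfar.
  pose proof (Rmax_l B 0). pose proof (Rmax_r B 0).
  pose proof (Rdiv_le_0_compat _ _ (Rmax_r B 0) Heps).
  assert (Hsq : (z - a) ^ 2 = Rabs (z - a) * Rabs (z - a))
    by (rewrite <- Rabs_mult, Rabs_right; [ring | apply Rle_ge, Rle_0_sqr]).
  assert (HM : Rmax B 0 / eps + 1 < Rabs (z - a) * Rabs (z - a)) by nra.
  assert (Hexp : 1 <= exp (K * t)) by (rewrite <- exp_0; apply exp_le_mono; nra).
  assert (eps * (Rmax B 0 / eps + 1) = Rmax B 0 + eps) by (field; lra).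
  unfold paraboloid. rewrite Hsq.
  assert (eps * (Rmax B 0 / eps + 1) < eps * (1 + Rabs (z - a) * Rabs (z - a)))
    by (apply Rmult_lt_compat_l; lra).
  assert (0 <= eps * (1 + Rabs (z - a) * Rabs (z - a))) by lra.
  nra.
Qed.

(* At a touching point, [u_t >= psi_t = K psi], [u_z = psi_z] and [u_zz <= psi_zz];
   the choice of [K] makes this incompatible with the delayed inequality. *)
Lemma paraboloid_cannot_touch_subsolution (u : R -> R -> R) c h L eps K a tau zs r :
  0 < eps -> 0 <= L -> 0 < r -> K = 2 + c ^ 2 + L * (2 + 2 * c ^ 2 * h ^ 2) ->
  delayed_subsolution_at c h L u tau zs ->
  u tau zs = paraboloid eps K a tau zs ->
  (forall s, tau - r < s < tau -> u s zs <= paraboloid eps K a s zs) ->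
  (forall y, Rabs (y - zs) < r -> u tau y <= paraboloid eps K a tau y) ->
  Rmax 0 (u (tau - h) (zs - c * h)) <= (2 + 2 * c ^ 2 * h ^ 2) * paraboloid eps K a tau zs ->
  False.
Proof.
  intros Heps HL Hr HK [Ht [Hz [Hzz Hineq]]] Hu Htime Hspace Hdel.
  set (P := eps * exp (K * tau)).
  assert (HP : 0 < P) by (apply Rmult_lt_0_compat; [exact Heps | apply exp_pos]).
  destruct (touching_from_above u (paraboloid eps K a) (fun z => P * (2 * (z - a))) tau zs r
              (K * paraboloid eps K a tau zs) (P * 2))
    as [Hut [Huz Huzz]]; auto.
  { unfold paraboloid. auto_derive; auto. ring. }
  { intro z. unfold paraboloid, P. auto_derive; auto. ring. }
  { auto_derive; auto. ring. }
  set (y := zs - a) in *.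
  assert (Hpar : paraboloid eps K a tau zs = P * (1 + y ^ 2)) by reflexivity.
  rewrite Hpar in Hut, Hdel. rewrite Hu, Hpar, Huz in Hineq.
  assert (HLd : L * Rmax 0 (u (tau - h) (zs - c * h)) <=
                L * ((2 + 2 * c ^ 2 * h ^ 2) * (P * (1 + y ^ 2))))
    by (apply Rmult_le_compat_l; assumption).
  assert (Hgap : 0 < (K + 1) * (1 + y ^ 2) + 2 * c * y - 2
                     - L * (2 + 2 * c ^ 2 * h ^ 2) * (1 + y ^ 2))
    by (rewrite HK; nra).
  nra.
Qed.

Lemma delayed_value_le_paraboloid (u : R -> R -> R) sg a c h eps K tau zs :
  0 <= eps -> 0 <= K -> 0 <= h ->
  (forall t z, 0 <= t <= tau -> 0 <= sg * (z - a) -> u t z <= paraboloid eps K a t z) ->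
  (tau - h < 0 \/ sg * (zs - c * h - a) <= 0 -> u (tau - h) (zs - c * h) <= 0) ->
  Rmax 0 (u (tau - h) (zs - c * h)) <= (2 + 2 * c ^ 2 * h ^ 2) * paraboloid eps K a tau zs.
Proof.
  intros Heps HK Hh Hbelow Hout.
  pose proof (paraboloid_delay_le eps K a c h tau zs Heps HK Hh) as Hshift.
  assert (Hpar : 0 <= paraboloid eps K a (tau - h) (zs - c * h))
    by (unfold paraboloid; pose proof (exp_pos (K * (tau - h)));
        pose proof (pow2_ge_0 (zs - c * h - a)); apply Rmult_le_pos; [apply Rmult_le_pos |]; lra).
  apply Rmax_lub; [lra |].
  destruct (Rlt_or_le (tau - h) 0) as [Hneg | Hnn]; [pose proof (Hout (or_introl Hneg)); lra |].
  destruct (Rle_or_lt (sg * (zs - c * h - a)) 0) as [Hoff | Hon];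
    [pose proof (Hout (or_intror Hoff)); lra |].
  pose proof (Hbelow (tau - h) (zs - c * h) ltac:(lra) ltac:(lra)). lra.
Qed.

(* If [u t1 z1 > 0], the paraboloid taking half that value at [(t1, z1)]
   touches [u] from above at a first contact time. *)
Lemma half_line_comparison (u : R -> R -> R) (sg a c h L B : R) :
  sg = 1 \/ sg = -1 -> 0 <= h -> 0 <= L -> jointly_continuous_t_ge0 u ->
  (forall t z, 0 <= t -> 0 <= sg * (z - a) -> u t z <= B) ->
  (forall z, 0 <= sg * (z - a) -> u 0 z <= 0) ->
  (forall t, 0 <= t -> u t a <= 0) ->
  (forall t z, 0 < t -> 0 < sg * (z - a) -> delayed_subsolution_at c h L u t z) ->
  (forall t z, 0 < t -> 0 < sg * (z - a) -> (t - h < 0 \/ sg * (z - c * h - a) <= 0) ->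
     u (t - h) (z - c * h) <= 0) ->
  forall t z, 0 <= t -> 0 <= sg * (z - a) -> u t z <= 0.
Proof.
  intros Hsg Hh HL Hcont Hbd Hinit Hbdry Hsub Hdelay t1 z1 Ht1 Hz1.
  apply Rnot_lt_le; intro Hu1.
  set (Cd := 2 + 2 * c ^ 2 * h ^ 2).
  set (K := 2 + c ^ 2 + L * Cd).
  assert (HCd : 2 <= Cd) by (unfold Cd; nra).
  assert (HK : 0 < K) by (unfold K; nra).
  assert (Hpar1 : 0 < paraboloid 1 K a t1 z1)
    by (unfold paraboloid; pose proof (exp_pos (K * t1)); pose proof (pow2_ge_0 (z1 - a)); nra).
  set (eps := u t1 z1 / (2 * paraboloid 1 K a t1 z1)).
  assert (Heps : 0 < eps) by (apply Rdiv_lt_0_compat; lra).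
  assert (Hpos : forall t z, 0 < paraboloid eps K a t z)
    by (intros; unfold paraboloid; pose proof (pow2_ge_0 (z - a));
        apply Rmult_lt_0_compat; [apply Rmult_lt_0_compat; [exact Heps | apply exp_pos] | lra]).
  destruct (paraboloid_far_dominates eps K a B Heps (Rlt_le _ _ HK)) as [M HM].
  destruct (first_contact (fun t z => u t z - paraboloid eps K a t z) sg a M t1 z1 Hsg)
    as [tau [zs [Htau [Hzs [Hcontact Hbelow]]]]]; cbv beta in *.
  { apply jointly_continuous_t_ge0_minus; [exact Hcont | apply paraboloid_continuous]. }
  { intros t z Ht Hz Hfar. specialize (Hbd t z Ht Hz). specialize (HM t z Ht Hfar). lra. }
  { intros z Hz. specialize (Hinit z Hz). specialize (Hpos 0 z). lra. }
  { exact Ht1. }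
  { exact Hz1. }
  { assert (paraboloid eps K a t1 z1 = eps * paraboloid 1 K a t1 z1)
      by (unfold paraboloid; ring).
    assert (eps * paraboloid 1 K a t1 z1 = u t1 z1 / 2) by (unfold eps; field; lra). lra. }
  assert (Hin : 0 < sg * (zs - a)).
  { destruct Hzs as [Hzs | Hzs]; [exact Hzs |].
    replace zs with a in Hcontact by (destruct Hsg as [-> | ->]; lra).
    specialize (Hbdry tau (Rlt_le _ _ Htau)). specialize (Hpos tau a). lra. }
  assert (Hdel : Rmax 0 (u (tau - h) (zs - c * h)) <= Cd * paraboloid eps K a tau zs).
  { apply (delayed_value_le_paraboloid u sg a c h eps K tau zs); try lra.
    - intros t z Ht Hz. specialize (Hbelow t z Ht Hz). lra.
    - exact (Hdelay tau zs Htau Hin). }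
  pose proof (Rmin_l tau (sg * (zs - a))). pose proof (Rmin_r tau (sg * (zs - a))).
  apply (paraboloid_cannot_touch_subsolution u c h L eps K a tau zs (Rmin tau (sg * (zs - a))));
    auto; [apply Rmin_pos; lra | lra | |].
  - intros s Hs. enough (u s zs - paraboloid eps K a s zs <= 0) by lra. apply Hbelow; lra.
  - intros z Hdz. enough (u tau z - paraboloid eps K a tau z <= 0) by lra. apply Hbelow; [lra |].
    rewrite <- (Rabs_sign_mul sg) in Hdz by exact Hsg. apply Rabs_def2 in Hdz. lra.
Qed.

Lemma hyp_H_decomposition (g : R -> R) kappa : hyp_H g kappa -> forall x,
  g x = g (Rmin (Rmax x 0) kappa) + Derive g 0 * Rmin x 0 + Derive g kappa * Rmax (x - kappa) 0.
Proof.
  intros [Hk [Hg0 [Hgk [_ [_ [_ [_ [_ [_ [_ [_ [_ [_ [_ [_ [_ [_ [_ [Hl0 Hlk]]]]]]]]]]]]]]]]]]] x.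
  destruct (Rle_dec x 0) as [H0 | H0]; [| destruct (Rle_dec x kappa) as [H1 | H1]].
  - rewrite (Hl0 x H0), (Rmax_right x 0 H0), (Rmin_left 0 kappa), Hg0, (Rmin_left x 0 H0),
      (Rmax_right (x - kappa) 0) by lra. ring.
  - rewrite (Rmax_left x 0), (Rmin_left x kappa), (Rmin_right x 0), (Rmax_right (x - kappa) 0)
      by lra. ring.
  - rewrite (Hlk x), (Rmax_left x 0), (Rmin_right x kappa), Hgk, (Rmin_right x 0),
      (Rmax_left (x - kappa) 0) by lra. ring.
Qed.

Lemma hyp_H_lipschitz (g : R -> R) kappa : hyp_H g kappa ->
  exists L, 0 <= L /\ forall x y, Rabs (g x - g y) <= L * Rabs (x - y).
Proof.
  intros HH. pose proof (hyp_H_decomposition g kappa HH) as Hdec.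
  destruct HH as [Hk [_ [_ [_ [_ [Lg [_ [_ [_ [_ [_ [_ [_ [_ [_ [_ [HLip _]]]]]]]]]]]]]]]]].
  set (D0 := Derive g 0) in *. set (Dk := Derive g kappa) in *.
  set (p := fun x => Rmin (Rmax x 0) kappa).
  pose proof (Rabs_pos Lg). pose proof (Rabs_pos D0). pose proof (Rabs_pos Dk).
  exists (Rabs Lg + Rabs D0 + Rabs Dk). split; [lra |]. intros x y.
  assert (Hp : forall x, 0 <= p x <= kappa)
    by (intro; unfold p, Rmin, Rmax; repeat destruct Rle_dec; lra).
  assert (A1 : Rabs (p x - p y) <= Rabs (x - y))
    by (unfold p, Rmin, Rmax; repeat destruct Rle_dec; unfold Rabs; repeat destruct Rcase_abs; lra).
  assert (A2 : Rabs (Rmin x 0 - Rmin y 0) <= Rabs (x - y))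
    by (unfold Rmin; repeat destruct Rle_dec; unfold Rabs; repeat destruct Rcase_abs; lra).
  assert (A3 : Rabs (Rmax (x - kappa) 0 - Rmax (y - kappa) 0) <= Rabs (x - y))
    by (unfold Rmax; repeat destruct Rle_dec; unfold Rabs; repeat destruct Rcase_abs; lra).
  assert (B1 : Rabs (g (p x) - g (p y)) <= Rabs Lg * Rabs (x - y)).
  { apply Rle_trans with (Lg * Rabs (p x - p y)); [exact (HLip _ _ (Hp x) (Hp y)) |].
    apply Rle_trans with (Rabs Lg * Rabs (p x - p y));
      [apply Rmult_le_compat_r; [apply Rabs_pos | apply Rle_abs] |].
    apply Rmult_le_compat_l; [apply Rabs_pos | exact A1]. }
  assert (B2 : Rabs (D0 * (Rmin x 0 - Rmin y 0)) <= Rabs D0 * Rabs (x - y))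
    by (rewrite Rabs_mult; apply Rmult_le_compat_l; [apply Rabs_pos | exact A2]).
  assert (B3 : Rabs (Dk * (Rmax (x - kappa) 0 - Rmax (y - kappa) 0)) <= Rabs Dk * Rabs (x - y))
    by (rewrite Rabs_mult; apply Rmult_le_compat_l; [apply Rabs_pos | exact A3]).
  rewrite (Hdec x), (Hdec y).
  change (Rmin (Rmax x 0) kappa) with (p x). change (Rmin (Rmax y 0) kappa) with (p y).
  replace (g (p x) + D0 * Rmin x 0 + Dk * Rmax (x - kappa) 0
           - (g (p y) + D0 * Rmin y 0 + Dk * Rmax (y - kappa) 0))
    with (g (p x) - g (p y) + D0 * (Rmin x 0 - Rmin y 0)
          + Dk * (Rmax (x - kappa) 0 - Rmax (y - kappa) 0)) by ring.
  eapply Rle_trans; [apply Rabs_triang |].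
  eapply Rle_trans; [apply Rplus_le_compat_r, Rabs_triang |]. lra.
Qed.

Lemma increasing_one_sided_lipschitz (g : R -> R) L :
  (forall x y, x <= y -> g x <= g y) -> (forall x y, Rabs (g x - g y) <= L * Rabs (x - y)) ->
  forall x y, g x - g y <= L * Rmax 0 (x - y).
Proof.
  intros Hmono HL x y. destruct (Rle_or_lt x y) as [Hxy | Hxy].
  - rewrite Rmax_left by lra. specialize (Hmono x y Hxy). lra.
  - rewrite Rmax_right by lra. specialize (HL x y). rewrite (Rabs_right (x - y)) in HL by lra.
    pose proof (Rle_abs (g x - g y)). lra.
Qed.

Lemma hyp_H_local_slopes g kappa rL rR : hyp_H g kappa -> 0 < rL -> 0 < rR ->
  exists b, 0 < b /\
    (forall a s, 0 <= a -> 0 <= s -> a + s <= b ->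
       g (a + s) - g a <= (Derive g 0 + rL) * s) /\
    (forall a s, kappa - b <= a -> 0 <= s -> a + s <= kappa + b ->
       g (a + s) - g a <= (Derive g kappa + rR) * s).
Proof.
  intros [_ [_ [_ [_ [d0 [_ [_ [_ [Hd0 [_ [_ [_ [HC0 [HCk _]]]]]]]]]]]]]] HrL HrR.
  destruct (increment_le_near g 0 d0 rL Hd0 HrL) as [bL [HbL HgL]].
  { intros x Hx. rewrite Rminus_0_r in Hx. apply HC0, Hx. }
  { apply HC0. rewrite Rabs_R0. exact Hd0. }
  destruct (increment_le_near g kappa d0 rR Hd0 HrR) as [bR [HbR HgR]].
  { intros x Hx. apply HCk, Hx. }
  { apply HCk. rewrite Rminus_diag, Rabs_R0. exact Hd0. }
  pose proof (Rmin_l bL bR). pose proof (Rmin_r bL bR).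
  exists (Rmin bL bR). split; [apply Rmin_pos; assumption | split].
  - intros a s Ha Hs Has. apply HgL; lra.
  - intros a s Ha Hs Has. apply HgR; lra.
Qed.

Lemma exp_convex p q s : 0 <= s <= 1 ->
  exp ((1 - s) * p + s * q) <= (1 - s) * exp p + s * exp q.
Proof.
  intros Hs. set (m := (1 - s) * p + s * q).
  assert (Htan : forall x, exp m * (1 + (x - m)) <= exp x).
  { intro x. replace (exp x) with (exp m * exp (x - m)) by (rewrite <- exp_plus; f_equal; ring).
    pose proof (exp_ineq1_le (x - m)). pose proof (exp_pos m). nra. }
  pose proof (Htan p). pose proof (Htan q).
  assert (exp m = (1 - s) * (exp m * (1 + (p - m))) + s * (exp m * (1 + (q - m))))
    by (unfold m; ring).
  nra.
Qed.

Lemma chi_convex g h c x y s : 0 <= Derive g 0 -> 0 <= s <= 1 ->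
  chi g h ((1 - s) * x + s * y) c <= (1 - s) * chi g h x c + s * chi g h y c.
Proof.
  intros HD0 Hs. unfold chi.
  pose proof (exp_convex (- x * c * h) (- y * c * h) s Hs) as Hexp.
  replace ((1 - s) * (- x * c * h) + s * (- y * c * h)) with (- ((1 - s) * x + s * y) * c * h)
    in Hexp by ring.
  assert (Hsq : ((1 - s) * x + s * y) ^ 2 <= (1 - s) * x ^ 2 + s * y ^ 2).
  { assert ((1 - s) * x ^ 2 + s * y ^ 2 - ((1 - s) * x + s * y) ^ 2 = s * (1 - s) * (x - y) ^ 2)
      by ring.
    pose proof (pow2_ge_0 (x - y)). assert (0 <= s * (1 - s)) by nra. nra. }
  pose proof (Rmult_le_compat_l _ _ _ HD0 Hexp). nra.
Qed.

Lemma chi_neg_between_zeros g h c l1 l2 lam : 0 <= Derive g 0 ->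
  are_lambdas g h c l1 l2 -> l1 < lam < l2 -> chi g h lam c < 0.
Proof.
  intros HD0 [Hl1 [Hl12 [Hz1 [Hz2 Hzeros]]]] Hlam.
  set (s := (lam - l1) / (l2 - l1)).
  assert (Hs : 0 <= s <= 1).
  { unfold s. split; [apply Rdiv_le_0_compat; lra |].
    apply (Rmult_le_reg_r (l2 - l1)); [lra |]. unfold Rdiv. rewrite Rmult_assoc, Rinv_l; lra. }
  assert (Hlam_eq : lam = (1 - s) * l1 + s * l2) by (unfold s; field; lra).
  pose proof (chi_convex g h c l1 l2 s HD0 Hs) as Hconv. rewrite <- Hlam_eq, Hz1, Hz2 in Hconv.
  destruct Hconv as [Hlt | Heq]; [lra |].
  destruct (Hzeros lam ltac:(lra) ltac:(lra)); lra.
Qed.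

Lemma c_sharp_pos g h cs : 0 <= Derive g 0 -> 0 <= h -> is_c_sharp g h cs -> 0 < cs.
Proof.
  intros HD0 Hh [[z [Hz [_ Hchi_z]]] _]. unfold chi_z in Hchi_z.
  pose proof (exp_pos (- z * cs * h)).
  assert (0 <= Derive g 0 * h * exp (- z * cs * h)) by (apply Rmult_le_pos; [nra | lra]).
  nra.
Qed.

(** * Barriers *)

Definition supersolution_at (g : R -> R) (c h : R) (Phi : R -> R -> R) (t z : R) : Prop :=
  ex_derive (fun s => Phi s z) t /\ (forall y, ex_derive (fun y => Phi t y) y) /\
  ex_derive (Derive (fun y => Phi t y)) z /\
  Derive (Derive (fun y => Phi t y)) z - c * Derive (fun y => Phi t y) z - Phi t z
    + g (Phi (t - h) (z - c * h)) <= Derive (fun s => Phi s z) t.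

Lemma solution_minus_supersolution g h c L w Phi t z :
  (forall x y, g x - g y <= L * Rmax 0 (x - y)) -> is_solution g h c w -> 0 < t ->
  supersolution_at g c h Phi t z ->
  delayed_subsolution_at c h L (fun t z => w t z - Phi t z) t z.
Proof.
  intros Hlip [_ Hsol] Ht [Pt [Pz [Pzz Hsuper]]].
  assert (Wz : forall y, ex_derive (fun y => w t y) y) by (intro y; apply (Hsol t y Ht)).
  destruct (Hsol t z Ht) as [Wt [_ [Wzz Hpde]]].
  assert (HD1 : forall y, Derive (fun y => w t y - Phi t y) y =
                          Derive (fun y => w t y) y - Derive (fun y => Phi t y) y)
    by (intro y; apply Derive_minus; [apply Wz | apply Pz]).
  split; [| split; [| split]].
  - apply (ex_derive_minus (fun s => w s z) (fun s => Phi s z)); assumption.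
  - intro y. apply (ex_derive_minus (fun y => w t y) (fun y => Phi t y)); [apply Wz | apply Pz].
  - apply (ex_derive_ext _ _ z (fun y => eq_sym (HD1 y))).
    apply (ex_derive_minus (Derive (fun y => w t y)) (Derive (fun y => Phi t y))); assumption.
  - rewrite Derive_minus by assumption.
    rewrite (Derive_ext _ _ z HD1), Derive_minus, HD1 by assumption.
    rewrite Hpde.
    change (Derive_n (fun y => w t y) 2 z) with (Derive (Derive (fun y => w t y)) z).
    specialize (Hlip (w (t - h) (z - c * h)) (Phi (t - h) (z - c * h))). lra.
Qed.

Definition barrier (phi : R -> R) (delta mu gamma t z : R) : R :=
  phi z + delta * exp (mu * z - gamma * t).

(* As [phi] solves the profile equation, the residual of the barrier is
   [g (a + s) - g a + (mu^2 - c mu - 1 + gamma) delta e^(mu z - gamma t)],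
   where [a + s] is its delayed value. *)
Lemma barrier_supersolution g kappa h c phi delta mu gamma k t z :
  is_wavefront g kappa h c phi -> 0 <= delta ->
  g (phi (z - c * h) + delta * exp (mu * (z - c * h) - gamma * (t - h))) - g (phi (z - c * h))
    <= k * (delta * exp (mu * (z - c * h) - gamma * (t - h))) ->
  k * exp (gamma * h - mu * c * h) + mu ^ 2 - c * mu - 1 + gamma <= 0 ->
  supersolution_at g c h (barrier phi delta mu gamma) t z.
Proof.
  intros [_ [_ [_ [Hd Hprof]]]] Hdelta Hslope Hrate.
  assert (Hd1 : forall x, ex_derive phi x) by (intro; apply Hd).
  assert (Hd2 : forall x, ex_derive (Derive phi) x) by (intro; apply Hd).
  set (E := fun t z => exp (mu * z - gamma * t)).
  assert (Ht : is_derive (fun s => barrier phi delta mu gamma s z) t (- gamma * delta * E t z))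
    by (unfold barrier, E, Rminus; auto_derive; auto; ring).
  assert (Hz : forall y, is_derive (fun y => barrier phi delta mu gamma t y) y
                           (Derive phi y + mu * delta * E t y)).
  { intro y. unfold barrier, E, Rminus. auto_derive; auto.
    change (fun x : R => phi x) with phi. ring. }
  assert (HDz : forall y, Derive (fun y => barrier phi delta mu gamma t y) y =
                          Derive phi y + mu * delta * E t y)
    by (intro y; apply is_derive_unique, Hz).
  assert (Hzz : is_derive (fun y => Derive phi y + mu * delta * E t y) z
                  (Derive (Derive phi) z + mu ^ 2 * delta * E t z)).
  { unfold E, Rminus. auto_derive; auto.
    change (fun x : R => Derive phi x) with (Derive phi). ring. }
  split; [| split; [| split]].
  - eexists; exact Ht.
  - intro y. eexists; apply Hz.
  - apply (ex_derive_ext _ _ z (fun y => eq_sym (HDz y))). eexists; exact Hzz.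
  - replace (Derive (Derive (fun y => barrier phi delta mu gamma t y)) z)
      with (Derive (Derive phi) z + mu ^ 2 * delta * E t z)
      by (rewrite (Derive_ext _ _ z HDz); symmetry; apply is_derive_unique, Hzz).
    replace (Derive (fun s => barrier phi delta mu gamma s z) t) with (- gamma * delta * E t z)
      by (symmetry; apply is_derive_unique, Ht).
    rewrite HDz.
    specialize (Hprof z). simpl in Hprof.
    assert (Hprofile : Derive (Derive phi) z - c * Derive phi z - phi z
                       + g (phi (z - c * h)) = 0) by exact Hprof.
    assert (Hdelay : delta * exp (mu * (z - c * h) - gamma * (t - h)) =
                     delta * E t z * exp (gamma * h - mu * c * h))
      by (unfold E; rewrite Rmult_assoc, <- exp_plus; f_equal; f_equal; ring).
    rewrite Hdelay in Hslope. unfold barrier. rewrite Hdelay.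
    change (exp (mu * z - gamma * t)) with (E t z).
    assert (HE : 0 <= delta * E t z)
      by (apply Rmult_le_pos; [exact Hdelta | apply Rlt_le, exp_pos]).
    pose proof (Rmult_le_compat_l _ _ _ HE Hrate). nra.
Qed.

(* Since [chi(lam) < 0] and [g'(kappa) < 1], the rate conditions of the left
   and right barriers hold with some room at [gamma = 0]; the slopes [kL], [kR]
   use half of that room, continuity in [gamma] the other half. *)
Lemma barrier_constants g kappa h c lam : hyp_H g kappa -> 0 <= h -> chi g h lam c < 0 ->
  exists gamma delta kL kR, 0 < gamma /\ 0 < delta /\ exp (gamma * h) <= 2 /\
    kL * exp (gamma * h - lam * c * h) + lam ^ 2 - c * lam - 1 + gamma <= 0 /\
    kR * exp (gamma * h) - 1 + gamma <= 0 /\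
    (forall a s, 0 <= a -> 0 <= s -> a + s <= 3 * delta -> g (a + s) - g a <= kL * s) /\
    (forall a s, kappa - 3 * delta <= a -> 0 <= s -> a + s <= kappa + 3 * delta ->
       g (a + s) - g a <= kR * s).
Proof.
  intros HH Hh Hchi.
  pose proof HH as [_ [_ [_ [_ [_ [_ [_ [_ [_ [_ [_ [_ [_ [_ [_ [HDk _]]]]]]]]]]]]]]]].
  set (E := exp (- lam * c * h)). pose proof (exp_pos (- lam * c * h)) as HE. fold E in HE.
  set (P := Derive g 0 * E). set (m := - chi g h lam c).
  assert (Hchi_eq : chi g h lam c = lam ^ 2 - c * lam - 1 + P) by reflexivity.
  assert (Hcont : forall k, continuity_pt (fun x => k * exp (x * h) + x) 0).
  { intro k. apply continuity_pt_of_ex_derive. auto_derive. auto. }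
  destruct (le_near_0 (fun x => (P + m / 2) * exp (x * h) + x) (P + m) (Hcont _))
    as [g1 [Hg1 HL]]; [rewrite Rmult_0_l, exp_0; unfold m; lra |].
  set (kR := Derive g kappa + (1 - Derive g kappa) / 2).
  destruct (le_near_0 (fun x => kR * exp (x * h) + x) 1 (Hcont _))
    as [g2 [Hg2 HR]]; [rewrite Rmult_0_l, exp_0; unfold kR; lra |].
  destruct (le_near_0 (fun x => exp (x * h)) 2)
    as [g3 [Hg3 HE2]]; [apply continuity_pt_of_ex_derive; auto_derive; auto |
                         rewrite Rmult_0_l, exp_0; lra |].
  pose proof (Rmin_l g1 (Rmin g2 g3)). pose proof (Rmin_r g1 (Rmin g2 g3)).
  pose proof (Rmin_l g2 g3). pose proof (Rmin_r g2 g3).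
  assert (Hgamma : 0 < Rmin g1 (Rmin g2 g3)) by (apply Rmin_pos; [| apply Rmin_pos]; assumption).
  set (gamma := Rmin g1 (Rmin g2 g3)) in *.
  destruct (hyp_H_local_slopes g kappa (m / (2 * E)) ((1 - Derive g kappa) / 2) HH)
    as [b [Hb [HgL HgR]]]; [apply Rdiv_lt_0_compat; unfold m; lra | lra |].
  exists gamma, (b / 3), (Derive g 0 + m / (2 * E)), kR.
  split; [exact Hgamma | split; [lra | split; [| split; [| split; [| split]]]]].
  - apply HE2. lra.
  - specialize (HL gamma ltac:(lra)). cbv beta in HL.
    replace (exp (gamma * h - lam * c * h)) with (exp (gamma * h) * E)
      by (unfold E; rewrite <- exp_plus; f_equal; ring).
    replace ((Derive g 0 + m / (2 * E)) * (exp (gamma * h) * E)) with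
      ((P + m / 2) * exp (gamma * h)) by (unfold P; field; lra).
    unfold m in *. lra.
  - specialize (HR gamma ltac:(lra)). cbv beta in HR. lra.
  - intros a s Ha Hs Has. apply HgL; lra.
  - intros a s Ha Hs Has. apply HgR; lra.
Qed.

Lemma eta_pos lam z : 0 < eta lam z.
Proof. unfold eta. apply Rmin_pos; [apply exp_pos | lra]. Qed.

(** * Estimates outside the window *)

Section Estimates.

Variables (g : R -> R) (kappa h c L : R) (phi : R -> R) (w : R -> R -> R)
  (lam gamma delta Rr : R).
Hypothesis Hh : 0 <= h.
Hypothesis Hc : 0 < c.
Hypothesis Hlam : 0 <= lam.
Hypothesis Hgamma : 0 < gamma.
Hypothesis Hdelta : 0 < delta.
Hypothesis Hgh : exp (gamma * h) <= 2.
Hypothesis HL : 0 <= L.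
Hypothesis Hlip : forall x y, g x - g y <= L * Rmax 0 (x - y).
Hypothesis Hwf : is_wavefront g kappa h c phi.
Hypothesis Hsol : is_solution g h c w.
Hypothesis HRr : c * h < Rr.
Hypothesis Hinit : forall s z, -h <= s <= 0 -> w s z <= phi z + delta * eta lam z.
Hypothesis Hmid : forall t z, 0 <= t -> - Rr - c * h <= z <= Rr + c * h -> w t z <= phi z.

Lemma barrier_gap_continuous mu :
  jointly_continuous_t_ge0 (fun t z => w t z - barrier phi delta mu gamma t z).
Proof.
  apply jointly_continuous_t_ge0_minus.
  - intros t z Ht eps Heps. destruct (proj1 Hsol t z ltac:(lra) eps Heps) as [d [Hd Hcont]].
    exists d. split; [exact Hd |]. intros t' z' Ht'. apply Hcont. lra.
  - intros t z. unfold barrier. destruct Hwf as [_ [_ [_ [Hd _]]]].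
    apply continuity_2d_pt_plus.
    + apply (continuity_1d_2d_pt_comp phi (fun _ z => z)); [| apply continuity_2d_pt_id2].
      apply continuity_pt_of_ex_derive, Hd.
    + apply continuity_2d_pt_mult; [apply continuity_2d_pt_const |].
      apply (continuity_1d_2d_pt_comp exp (fun t z => mu * z - gamma * t)).
      * apply continuity_pt_of_ex_derive. auto_derive. auto.
      * apply continuity_2d_pt_minus; apply continuity_2d_pt_mult;
          first [apply continuity_2d_pt_const | apply continuity_2d_pt_id1
                | apply continuity_2d_pt_id2].
Qed.

Lemma phi_le_barrier mu t z : phi z <= barrier phi delta mu gamma t z.
Proof. unfold barrier. pose proof (exp_pos (mu * z - gamma * t)). nra. Qed.

Lemma before_start_le_barrier mu s z :
  -h <= s <= 0 -> eta lam z <= exp (mu * z) -> w s z <= barrier phi delta mu gamma s z.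
Proof.
  intros Hs Heta. eapply Rle_trans; [apply Hinit, Hs |]. unfold barrier.
  apply Rplus_le_compat_l, Rmult_le_compat_l; [lra |].
  eapply Rle_trans; [exact Heta | apply exp_le_mono; nra].
Qed.

Lemma left_estimate kL :
  kL * exp (gamma * h - lam * c * h) + lam ^ 2 - c * lam - 1 + gamma <= 0 ->
  (forall a s, 0 <= a -> 0 <= s -> a + s <= 3 * delta -> g (a + s) - g a <= kL * s) ->
  (forall t z, -h <= t -> z <= - Rr + c * h -> 0 <= w t z <= delta /\ 0 <= phi z <= delta) ->
  forall t z, 0 <= t -> z <= - Rr - c * h ->
    w t z <= phi z + delta * eta lam z * exp (- gamma * t).
Proof.
  intros Hrate Hslope Hleft t z Ht Hz.
  assert (Hch : 0 <= c * h) by nra.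
  assert (Hcmp : w t z - barrier phi delta lam gamma t z <= 0).
  { apply (half_line_comparison (fun t z => w t z - barrier phi delta lam gamma t z)
             (-1) (- Rr - c * h) c h L delta);
      [right; reflexivity | exact Hh | exact HL | | | | | | | lra | lra].
    - apply barrier_gap_continuous.
    - intros t1 z1 Ht1 Hz1. destruct (Hleft t1 z1 ltac:(lra) ltac:(lra)) as [[_ Hw] _].
      pose proof (phi_le_barrier lam t1 z1). pose proof (proj1 Hwf z1). lra.
    - intros z1 _. pose proof (before_start_le_barrier lam 0 z1 ltac:(lra) (Rmin_l _ _)). lra.
    - intros t1 Ht1. pose proof (Hmid t1 (- Rr - c * h) Ht1 ltac:(lra)).
      pose proof (phi_le_barrier lam t1 (- Rr - c * h)). lra.
    - intros t1 z1 Ht1 Hz1. apply (solution_minus_supersolution g h c L); auto.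
      apply (barrier_supersolution g kappa h c phi delta lam gamma kL);
        [exact Hwf | lra | | exact Hrate].
      destruct (Hleft 0 (z1 - c * h) ltac:(lra) ltac:(lra)) as [_ Hphi].
      assert (Hexp : exp (lam * (z1 - c * h) - gamma * (t1 - h)) <= 2)
        by (eapply Rle_trans; [apply exp_le_mono | exact Hgh]; nra).
      pose proof (exp_pos (lam * (z1 - c * h) - gamma * (t1 - h))).
      apply Hslope; nra.
    - intros t1 z1 Ht1 Hz1 [Hneg | Hout]; [| lra].
      pose proof (before_start_le_barrier lam (t1 - h) (z1 - c * h) ltac:(lra) (Rmin_l _ _)). lra. }
  unfold barrier in Hcmp.
  replace (eta lam z) with (exp (lam * z))
    by (unfold eta; rewrite Rmin_left; [reflexivity | rewrite <- exp_0; apply exp_le_mono; nra]).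
  rewrite Rmult_assoc, <- exp_plus.
  replace (lam * z + - gamma * t) with (lam * z - gamma * t) by ring.
  lra.
Qed.

Lemma right_estimate kR :
  kR * exp (gamma * h) - 1 + gamma <= 0 ->
  (forall a s, kappa - 3 * delta <= a -> 0 <= s -> a + s <= kappa + 3 * delta ->
     g (a + s) - g a <= kR * s) ->
  (forall t z, -h <= t -> Rr - c * h <= z ->
     Rabs (w t z - kappa) < delta /\ Rabs (phi z - kappa) < delta) ->
  forall t z, 0 <= t -> Rr + c * h <= z ->
    w t z <= phi z + delta * eta lam z * exp (- gamma * t).
Proof.
  intros Hrate Hslope Hright t z Ht Hz.
  assert (Hch : 0 <= c * h) by nra.
  assert (Heta0 : forall z, eta lam z <= exp (0 * z))
    by (intro; rewrite Rmult_0_l, exp_0; apply Rmin_r).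
  assert (Hcmp : w t z - barrier phi delta 0 gamma t z <= 0).
  { apply (half_line_comparison (fun t z => w t z - barrier phi delta 0 gamma t z)
             1 (Rr + c * h) c h L (2 * delta));
      [left; reflexivity | exact Hh | exact HL | | | | | | | lra | lra].
    - apply barrier_gap_continuous.
    - intros t1 z1 Ht1 Hz1. destruct (Hright t1 z1 ltac:(lra) ltac:(lra)) as [Hw Hphi].
      pose proof (phi_le_barrier 0 t1 z1).
      apply Rabs_def2 in Hw. apply Rabs_def2 in Hphi. lra.
    - intros z1 _. pose proof (before_start_le_barrier 0 0 z1 ltac:(lra) (Heta0 z1)). lra.
    - intros t1 Ht1. pose proof (Hmid t1 (Rr + c * h) Ht1 ltac:(lra)).
      pose proof (phi_le_barrier 0 t1 (Rr + c * h)). lra.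
    - intros t1 z1 Ht1 Hz1. apply (solution_minus_supersolution g h c L); auto.
      apply (barrier_supersolution g kappa h c phi delta 0 gamma kR); [exact Hwf | lra | |].
      + destruct (Hright 0 (z1 - c * h) ltac:(lra) ltac:(lra)) as [_ Hphi].
        apply Rabs_def2 in Hphi.
        assert (Hexp : exp (0 * (z1 - c * h) - gamma * (t1 - h)) <= 2)
          by (eapply Rle_trans; [apply exp_le_mono | exact Hgh]; nra).
        pose proof (exp_pos (0 * (z1 - c * h) - gamma * (t1 - h))).
        apply Hslope; nra.
      + replace (gamma * h - 0 * c * h) with (gamma * h) by ring. nra.
    - intros t1 z1 Ht1 Hz1 Hout.
      destruct (Rlt_or_le (t1 - h) 0) as [Hneg | Hnn].
      + pose proof (before_start_le_barrier 0 (t1 - h) (z1 - c * h) ltac:(lra) (Heta0 _)). lra.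
      + destruct Hout as [Hneg | Hout]; [lra |].
        pose proof (Hmid (t1 - h) (z1 - c * h) Hnn ltac:(lra)).
        pose proof (phi_le_barrier 0 (t1 - h) (z1 - c * h)). lra. }
  unfold barrier in Hcmp.
  replace (eta lam z) with 1
    by (unfold eta; rewrite Rmin_right; [reflexivity | rewrite <- exp_0; apply exp_le_mono; nra]).
  replace (0 * z - gamma * t) with (- gamma * t) in Hcmp by ring.
  lra.
Qed.

End Estimates.

Theorem lemma2 (g : R -> R) (kappa h c cs l1 l2 lam : R) (phi : R -> R) :
  (forall x y, x <= y -> g x <= g y) ->
  hyp_H g kappa ->
  0 <= h ->
  is_wavefront g kappa h c phi ->
  is_min_speed g kappa h c ->
  is_c_sharp g h cs ->
  cs < c ->
  are_lambdas g h c l1 l2 ->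
  l1 < lam < l2 ->
  exists gamma delta, 0 < gamma /\ 0 < delta /\
    forall (w : R -> R -> R) (Rr : R),
      is_solution g h c w ->
      (forall s z, -h <= s <= 0 -> 0 <= w s z <= kappa) ->
      loc_holder_initial h w ->
      c * h < Rr ->
      (forall t z, -h <= t -> z <= - Rr + c * h ->
         0 <= w t z <= delta /\ 0 <= phi z <= delta) ->
      (forall t z, -h <= t -> Rr - c * h <= z ->
         Rabs (w t z - kappa) < delta /\ Rabs (phi z - kappa) < delta) ->
      (forall s z, -h <= s <= 0 -> w s z <= phi z + delta * eta lam z) ->
      (forall t z, 0 <= t -> - Rr - c * h <= z <= Rr + c * h -> w t z <= phi z) ->
      forall t z, 0 <= t -> w t z <= phi z + delta * eta lam z * exp (- gamma * t).
Proof.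
  intros Hmono HH Hh Hwf _ Hcs Hcsc Hlams Hlam.
  assert (HD0 : 0 <= Derive g 0)
    by (destruct HH as [_ [_ [_ [_ [_ [_ [_ [_ [_ [_ [_ [_ [_ [_ [HD0 _]]]]]]]]]]]]]]]; lra).
  assert (Hc : 0 < c) by (pose proof (c_sharp_pos g h cs HD0 Hh Hcs); lra).
  assert (Hlam0 : 0 <= lam) by (destruct Hlams; lra).
  pose proof (chi_neg_between_zeros g h c l1 l2 lam HD0 Hlams Hlam) as Hchi.
  destruct (hyp_H_lipschitz g kappa HH) as [L [HL HLip]].
  pose proof (increasing_one_sided_lipschitz g L Hmono HLip) as Hlip.
  destruct (barrier_constants g kappa h c lam HH Hh Hchi)
    as (gamma & delta & kL & kR & Hgamma & Hdelta & Hgh & HrL & HrR & HgL & HgR).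
  exists gamma, delta. split; [exact Hgamma | split; [exact Hdelta |]].
  intros w Rr Hsol _ _ HRr Hleft Hright Hinit Hmid t z Ht.
  destruct (Rlt_or_le z (- Rr - c * h)) as [Hz | Hz];
    [| destruct (Rle_or_lt z (Rr + c * h)) as [Hz' | Hz']].
  - apply (left_estimate g kappa h c L phi w lam gamma delta Rr
             Hh Hc Hlam0 Hgamma Hdelta Hgh HL Hlip Hwf Hsol HRr Hinit Hmid kL HrL HgL Hleft);
      lra.
  - pose proof (eta_pos lam z). pose proof (exp_pos (- gamma * t)).
    assert (0 <= delta * eta lam z * exp (- gamma * t)) by (apply Rmult_le_pos; nra).
    pose proof (Hmid t z Ht (conj Hz Hz')). lra.
  - apply (right_estimate g kappa h c L phi w lam gamma delta Rr
             Hh Hc Hlam0 Hgamma Hdelta Hgh HL Hlip Hwf Hsol HRr Hinit Hmid kR HrR HgR Hright);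
      lra.
Qed.
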